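(* Suppose that for an agent $m$ and iteration $k$, $$ \mathbb{E}_{\sigma_k}\Big((\theta_{k+1}^m-\theta_k^m)^\top\phi-\beta_k^{-1}\hat Q^{1:m}_{\boldsymbol{\pi}_{\theta_k}}\Big)^2\le(\epsilon_k^m)^2,\qquad \mathbb{E}_{\sigma_k}\Big(\hat Q^{1:m}_{\boldsymbol{\pi}_{\theta_k}}-Q^{1:m}_{\boldsymbol{\pi}_{\theta_k}}\Big)^2\le(\xi_k^m)^2, $$ where all functions are evaluated at $(s,\mathbf{a}^{1:m-1},a^m)$. Let $\pi^m_{k+1}(\cdot|s,\mathbf{a}^{1:m-1})\propto\exp\{\beta_k^{-1}Q^{1:m}_{\boldsymbol{\pi}_{\theta_k}}(s,\mathbf{a}^{1:m-1},\cdot)+\phi^\top(s,\mathbf{a}^{1:m-1},\cdot)\theta_k^m\}$. Then $$ \Big|\mathbb{E}_{s\sim\nu_*,\ \mathbf{a}^{1:m-1}\sim\boldsymbol{\pi}_*^{1:m-1}}\Big\langle\log\frac{\pi_{\theta_{k+1}^m}(\cdot|s,\mathbf{a}^{1:m-1})}{\pi^m_{k+1}(\cdot|s,\mathbf{a}^{1:m-1})},\ \pi_*^m(\cdot|s,\mathbf{a}^{1:m-1})-\pi_{\theta_k^m}(\cdot|s,\mathbf{a}^{1:m-1})\Big\rangle\Big|\le\Delta_k^m, $$ where $\Delta_k^m=\sqrt2(\phi_k^m+\phi_k^{m-1})\big(\epsilon_k^m+\frac{\xi_k^m}{\beta_k}\big)$.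
   Context: Fully cooperative Markov game with agents $\{1,\dots,N\}$, finite state space $\mathcal{S}$, finite individual action space $\mathcal{A}$. Joint policies in sequential conditional form $\boldsymbol{\pi}(\mathbf{a}|s)=\prod_m\pi^m(a^m|s,\mathbf{a}^{1:m-1})$; $\boldsymbol{\pi}^{1:m}$ is the induced law of $\mathbf{a}^{1:m}$; $Q^{1:m}_{\boldsymbol{\pi}}$ is the expected joint action-value given $\mathbf{a}^{1:m}$ when the other agents follow $\boldsymbol{\pi}$. Log-linear policies $\pi_{\theta^m}(a^m|s,\mathbf{a}^{1:m-1})\propto\exp(\phi^\top(s,\mathbf{a}^{1:m-1},a^m)\theta^m)$, $\|\phi\|_2\le1$. $\boldsymbol{\pi}_{\theta_k}$ is the current joint policy with parameters $\theta_k^1,\dots,\theta_k^N$, $\nu_k$ its stationary state distribution, $\sigma_k$ the law of $(s,\mathbf{a}^{1:m-1},a^m)$ with $s\sim\nu_k$, $\mathbf{a}^{1:m}\sim\boldsymbol{\pi}_{\theta_k}^{1:m}(\cdot|s)$. $\boldsymbol{\pi}_*$ is an optimal joint policy with stationary state distribution $\nu_*$. $\theta^m_{k+1}\in\mathbb{R}^d$, $\beta_k>0$, $\hat Q^{1:m}_{\boldsymbol{\pi}_{\theta_k}}$ is an estimator. $\langle\cdot,\cdot\rangle$ is the inner product over $\mathcal{A}$. Concentrability: $\phi_k^m=\big\|\frac{d(\nu_*\boldsymbol{\pi}_*^{1:m})}{d(\nu_k\boldsymbol{\pi}_{\theta_k}^{1:m})}\big\|_{2,\sigma_k}$ for $m\ge0$,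 with $\|f\|_{2,\rho}=(\sum\rho|f|^2)^{1/2}$. *)

From HB Require Import structures.
From mathcomp Require Import all_boot all_order all_algebra.
From mathcomp Require Import reals sequences exp.
Unset Printing Implicit Defensive.
Import Order.TTheory GRing.Theory Num.Theory.
Local Open Scope ring_scope.

Section MG.
Variables (R : realType) (S A : finType).

(* actprefix of actions a^{1:n} of the first n agents (0-based agents 0..n-1) *)
Definition actprefix (n : nat) := {ffun 'I_n -> A}.

Definition restr (n : nat) (a : actprefix n) (i : 'I_n) : actprefix i :=
  [ffun t : 'I_i => a (widen_ord (ltnW (ltn_ord i)) t)].

(* A joint policy in sequential conditional form:
   pol j s a^{1:j} b = pi^{j+1}(b | s, a^{1:j})   (0-based agent index j). *)
Definition seqpolicy := forall j : nat, S -> actprefix j -> A -> R.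

Definition is_policy (N : nat) (pol : seqpolicy) :=
  forall j, (j < N)%N -> forall s (x : actprefix j),
    (forall b, 0 <= pol j s x b) /\ \sum_b pol j s x b = 1.

Definition prefix_law (pol : seqpolicy) (n : nat) (s : S) (a : actprefix n) : R :=
  \prod_(i < n) pol i s (restr n a i) (a i).

Definition is_distr (nu : S -> R) :=
  (forall s, 0 <= nu s) /\ \sum_s nu s = 1.

Definition stationary (N : nat) (P : S -> actprefix N -> S -> R)
  (pol : seqpolicy) (nu : S -> R) :=
  is_distr nu /\
  forall s', nu s' = \sum_s \sum_(a : actprefix N) nu s * prefix_law pol N s a * P s a s'.

Definition dotv (d : nat) (u v : 'rV[R]_d) : R := \sum_(i < d) u 0 i * v 0 i.

Definition softmax (f : A -> R) (b : A) : R := expR (f b) / \sum_c expR (f c).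

Definition loglin (d : nat) (phi : forall j : nat, S -> actprefix j -> A -> 'rV[R]_d)
  (theta : nat -> 'rV[R]_d) : seqpolicy :=
  fun j s x b => softmax (fun c => dotv d (phi j s x c) (theta j)) b.

Definition joint_law (nu : S -> R) (pol : seqpolicy) (n : nat) (s : S) (a : actprefix n) :=
  nu s * prefix_law pol n s a.

Definition abs_cont (nu : S -> R) (pol : seqpolicy) (nu' : S -> R) (pol' : seqpolicy)
  (n : nat) :=
  forall s (a : actprefix n), joint_law nu pol n s a = 0 -> joint_law nu' pol' n s a = 0.

(* concentrability coefficient
   || d(nu' pol'^{1:n}) / d(nu pol^{1:n}) ||_{2, nu pol^{1:n}} *)
Definition conc (nu : S -> R) (pol : seqpolicy) (nu' : S -> R) (pol' : seqpolicy)
  (n : nat) : R :=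
  Num.sqrt (\sum_s \sum_(a : actprefix n)
     joint_law nu pol n s a * (joint_law nu' pol' n s a / joint_law nu pol n s a) ^+ 2).

Definition sigma_law (nu : S -> R) (pol : seqpolicy) (j : nat) (s : S) (x : actprefix j) (b : A) :=
  nu s * prefix_law pol j s x * pol j s x b.

Definition sq_err (nu : S -> R) (pol : seqpolicy) (j : nat) (f : S -> actprefix j -> A -> R) :=
  \sum_s \sum_(x : actprefix j) \sum_b sigma_law nu pol j s x b * (f s x b) ^+ 2.

End MG.

Arguments actprefix : clear implicits.
Arguments restr {A n} a i.
Arguments is_policy {R S A} N pol.
Arguments prefix_law {R S A} pol n s a.
Arguments is_distr {R S} nu.
Arguments stationary {R S A} N P pol nu.
Arguments dotv {R d} u v.
Arguments softmax {R A} f b.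
Arguments loglin {R S A d} phi theta j s x b.
Arguments joint_law {R S A} nu pol n s a.
Arguments abs_cont {R S A} nu pol nu' pol' n.
Arguments conc {R S A} nu pol nu' pol' n.
Arguments sigma_law {R S A} nu pol j s x b.
Arguments sq_err {R S A} nu pol j f.

From HB Require Import structures.
From mathcomp Require Import all_boot all_order all_algebra.
From mathcomp Require Import reals sequences exp.
From mathcomp Require Import ring lra.
Import Order.TTheory GRing.Theory Num.Theory.
Local Open Scope ring_scope.

(* The log-ratio of two softmax policies differs from the difference of their
   logits only by a constant, which the signed measure [pi_* - pi_k] annihilates;
   the logit difference of [pi_(theta_(k+1))] and [pi_(k+1)] is the regression error
   [e + beta^-1 (Qhat - Q)].  Both expectations, under [nu_* pi_*^(1:m)] and under
   [nu_* pi_*^(1:m-1) pi_k^m], are [sigma_k]-expectations weighted by a density, so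
   weighted Cauchy-Schwarz bounds each by [phi_k^m (eps + xi / beta)] resp.
   [phi_k^(m-1) (eps + xi / beta)]; the factor [sqrt 2 >= 1] is slack. *)

Section WeightedCauchySchwarz.
Context {R : realType} {I : finType} (p : I -> R).
Hypothesis p_ge0 : forall i, 0 <= p i.

Lemma weighted_cauchy_schwarz (w u : I -> R) :
  (\sum_i p i * w i * u i) ^+ 2 <= (\sum_i p i * w i ^+ 2) * (\sum_i p i * u i ^+ 2).
Proof.
set X := \sum_i _; set W := \sum_i _; set U := \sum_i _.
pose a i k := p i * w i ^+ 2 * (p k * u k ^+ 2).
pose c i k := p i * w i * u i * (p k * w k * u k).
have sum_a : \sum_i \sum_k a i k = W * U.
  by rewrite mulr_suml; apply: eq_bigr => i _; rewrite mulr_sumr.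
have sum_c : \sum_i \sum_k c i k = X ^+ 2.
  by rewrite expr2 mulr_suml; apply: eq_bigr => i _; rewrite mulr_sumr.
have lagrange : \sum_i \sum_k p i * p k * (w i * u k - w k * u i) ^+ 2 =
    2 * (W * U - X ^+ 2).
  transitivity (\sum_i \sum_k a i k + \sum_i \sum_k a k i - 2 * \sum_i \sum_k c i k).
    rewrite mulr_sumr -big_split -sumrB; apply: eq_bigr => i _.
    by rewrite mulr_sumr -big_split -sumrB; apply: eq_bigr => k _; rewrite /a /c /=; ring.
  by rewrite [\sum_i \sum_k a k i]exchange_big /= sum_a sum_c; ring.
suff : 0 <= 2 * (W * U - X ^+ 2) by rewrite pmulr_rge0 // subr_ge0.
rewrite -lagrange; apply: sumr_ge0 => i _; apply: sumr_ge0 => k _.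
by rewrite mulr_ge0 ?sqr_ge0 ?mulr_ge0.
Qed.

Lemma weighted_cauchy_schwarz_norm (w u : I -> R) (e : R) :
  0 <= e -> \sum_i p i * u i ^+ 2 <= e ^+ 2 ->
  `|\sum_i p i * w i * u i| <= Num.sqrt (\sum_i p i * w i ^+ 2) * e.
Proof.
move=> e_ge0 hu.
have W_ge0 : 0 <= \sum_i p i * w i ^+ 2 by apply: sumr_ge0 => i _; rewrite mulr_ge0 ?sqr_ge0.
rewrite -sqrtr_sqr -(ger0_norm e_ge0) -sqrtr_sqr -sqrtrM // ler_sqrt; last first.
  by rewrite mulr_ge0 ?sqr_ge0.
apply: le_trans (weighted_cauchy_schwarz w u) _.
by rewrite ler_wpM2l.
Qed.

Lemma weighted_error_bound (w e1 e2 : I -> R) (c eps xi : R) :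
  0 <= c -> 0 <= eps -> 0 <= xi ->
  \sum_i p i * e1 i ^+ 2 <= eps ^+ 2 -> \sum_i p i * e2 i ^+ 2 <= xi ^+ 2 ->
  `|\sum_i p i * w i * (e1 i + c * e2 i)| <=
    Num.sqrt (\sum_i p i * w i ^+ 2) * (eps + c * xi).
Proof.
move=> c_ge0 eps_ge0 xi_ge0 h1 h2.
rewrite (eq_bigr (fun i => p i * w i * e1 i + c * (p i * w i * e2 i))); last first.
  by move=> i _; ring.
rewrite big_split -mulr_sumr /= mulrDr mulrCA.
apply: le_trans (ler_normD _ _) _; rewrite normrM (ger0_norm c_ge0).
apply: lerD; first exact: weighted_cauchy_schwarz_norm.
by rewrite ler_wpM2l //; apply: weighted_cauchy_schwarz_norm.
Qed.

End WeightedCauchySchwarz.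

Section PrefixRcons.
Context {A : finType} {j : nat}.

Definition prefix_rcons (x : actprefix A j) (b : A) : actprefix A j.+1 :=
  [ffun t : 'I_j.+1 => if insub (val t) is Some t' then x t' else b].

Lemma prefix_rcons_lt x b (t : 'I_j.+1) (t' : 'I_j) :
  val t = val t' -> prefix_rcons x b t = x t'.
Proof.
move=> tt'; rewrite ffunE; case: insubP => [t'' _ t''t|]; last by rewrite tt' ltn_ord.
by congr (x _); apply: val_inj; rewrite /= t''t.
Qed.

Lemma prefix_rcons_last x b : prefix_rcons x b ord_max = b.
Proof. by rewrite ffunE insubF //= ltnn. Qed.

Lemma restr_prefix_rcons x b : restr (prefix_rcons x b) (@ord_max j) = x :> actprefix A j.
Proof. by apply/ffunP => t; rewrite ffunE; apply: prefix_rcons_lt. Qed.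

Lemma prefix_rcons_restr (a : actprefix A j.+1) :
  prefix_rcons (restr a (@ord_max j)) (a ord_max) = a.
Proof.
apply/ffunP => t; rewrite ffunE; case: insubP => [t' _ tt'|].
  by rewrite ffunE; congr (a _); apply: val_inj.
rewrite -ltnNge => jt; congr (a _); apply/val_inj/eqP.
by rewrite /= eqn_leq -ltnS jt -ltnS ltn_ord.
Qed.

Lemma big_prefix_rcons (R : nmodType) (F : actprefix A j.+1 -> R) :
  \sum_a F a = \sum_x \sum_b F (prefix_rcons x b).
Proof.
rewrite pair_bigA (reindex (fun q => prefix_rcons q.1 q.2)) //=.
exists (fun a => (restr a ord_max, a ord_max)) => [[x b] _ | a _] /=.
  by rewrite restr_prefix_rcons prefix_rcons_last.
exact: prefix_rcons_restr.
Qed.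

Lemma prefix_law_rcons (R : realType) (S : finType) (pol : seqpolicy R S A) s x b :
  prefix_law pol j.+1 s (prefix_rcons x b) = prefix_law pol j s x * pol j s x b.
Proof.
rewrite /prefix_law big_ord_recr /= restr_prefix_rcons prefix_rcons_last.
congr (_ * _); apply: eq_bigr => i _.
have restr_i : restr (prefix_rcons x b) (widen_ord (leqnSn j) i) = restr x i :> actprefix A i.
  by apply/ffunP => t; rewrite [LHS]ffunE [RHS]ffunE; apply: prefix_rcons_lt.
by rewrite restr_i (@prefix_rcons_lt x b (widen_ord (leqnSn j) i) i erefl).
Qed.

End PrefixRcons.

Lemma sum_eq1_card_gt0 (R : nzRingType) (A : finType) (p : A -> R) :
  \sum_b p b = 1 -> (0 < #|A|)%N.
Proof.
move=> p1; rewrite lt0n; apply/eqP => /card0_eq A0.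
by move: p1; rewrite big_pred0 // => /eqP; rewrite eq_sym oner_eq0.
Qed.

Section Softmax.
Context {R : realType} {A : finType}.
Implicit Types (f g p q : A -> R).

Lemma sum_expR_gt0 f (b : A) : 0 < \sum_c expR (f c).
Proof.
rewrite (bigD1 b) //=; apply: (lt_le_trans (expR_gt0 (f b))).
by rewrite lerDl sumr_ge0 // => c _; rewrite expR_ge0.
Qed.

Lemma softmax_gt0 f b : 0 < softmax f b.
Proof. by rewrite divr_gt0 ?expR_gt0 ?(sum_expR_gt0 f b). Qed.

Lemma sum_softmax f : (0 < #|A|)%N -> \sum_b softmax f b = 1.
Proof.
case/card_gt0P => b _.
by rewrite -mulr_suml divff // gt_eqF // (sum_expR_gt0 f b).
Qed.

Lemma ln_softmax f b : ln (softmax f b) = f b - ln (\sum_c expR (f c)).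
Proof. by rewrite ln_div ?posrE ?expR_gt0 ?(sum_expR_gt0 f b) // expRK. Qed.

Lemma sum_ln_softmax_ratio f g p q :
  \sum_b p b = \sum_b q b ->
  \sum_b ln (softmax f b / softmax g b) * (p b - q b) = \sum_b (f b - g b) * (p b - q b).
Proof.
move=> sum_pq; set K := ln (\sum_c expR (g c)) - ln (\sum_c expR (f c)).
rewrite (eq_bigr (fun b => (f b - g b) * (p b - q b) + K * (p b - q b))); last first.
  by move=> b _; rewrite ln_div ?posrE ?softmax_gt0 // !ln_softmax /K; ring.
by rewrite big_split /= -mulr_sumr sumrB sum_pq subrr mulr0 addr0.
Qed.

End Softmax.

Lemma dotvB (R : realType) (d : nat) (a v w : 'rV[R]_d) :
  dotv a (v - w) = dotv a v - dotv a w.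
Proof. by rewrite /dotv -sumrB; apply: eq_bigr => i _; rewrite !mxE mulrBr. Qed.

Section JointLaws.
Context {R : realType} {S A : finType}.
Implicit Types (nu : S -> R) (pol : seqpolicy R S A).

Lemma loglin_ge0 (d : nat) (phi : forall j, S -> actprefix A j -> A -> 'rV[R]_d)
    (theta : nat -> 'rV[R]_d) i s (x : actprefix A i) b :
  0 <= loglin phi theta i s x b.
Proof. exact/ltW/softmax_gt0. Qed.

Lemma sigma_law_ge0 nu pol j s (x : actprefix A j) b :
  (forall s, 0 <= nu s) -> (forall i s (x : actprefix A i) b, 0 <= pol i s x b) ->
  0 <= sigma_law nu pol j s x b.
Proof. by move=> nu_ge0 pol_ge0; rewrite !mulr_ge0 ?prodr_ge0. Qed.

Lemma joint_law_rcons nu pol j s (x : actprefix A j) b :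
  joint_law nu pol j.+1 s (prefix_rcons x b) = sigma_law nu pol j s x b.
Proof. by rewrite /joint_law prefix_law_rcons mulrA. Qed.

(* The Radon-Nikodym derivative of [nu' pol'^(1:n)] w.r.t. [nu pol^(1:n)]; where the
   latter vanishes it is [x / 0 = 0], which is harmless under [abs_cont]. *)
Definition density nu pol nu' pol' n s (a : actprefix A n) :=
  joint_law nu' pol' n s a / joint_law nu pol n s a.

Lemma abs_cont_densityE {nu pol nu' pol' n} s (a : actprefix A n) :
  abs_cont nu pol nu' pol' n ->
  joint_law nu' pol' n s a = joint_law nu pol n s a * density nu pol nu' pol' n s a.
Proof.
move=> ac; rewrite /density.
have [J0 | J_neq0] := eqVneq (joint_law nu pol n s a) 0.
  by rewrite (ac _ _ J0) J0 mul0r.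
by rewrite mulrCA divff ?mulr1.
Qed.

Lemma conc_succ_sq_err nu pol nu' pol' j :
  conc nu pol nu' pol' j.+1 =
  Num.sqrt (sq_err nu pol j
    (fun s x b => density nu pol nu' pol' j.+1 s (prefix_rcons x b))).
Proof.
rewrite /conc /sq_err; congr Num.sqrt; apply: eq_bigr => s _.
rewrite big_prefix_rcons; apply: eq_bigr => x _; apply: eq_bigr => b _.
by rewrite -joint_law_rcons.
Qed.

Lemma conc_sq_err nu pol nu' pol' j :
  (forall s (x : actprefix A j), \sum_b pol j s x b = 1) ->
  conc nu pol nu' pol' j =
  Num.sqrt (sq_err nu pol j (fun s x _ => density nu pol nu' pol' j s x)).
Proof.
move=> pol_sum1; rewrite /conc /sq_err; congr Num.sqrt; apply: eq_bigr => s _.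
apply: eq_bigr => x _; rewrite -[LHS]mulr1 -(pol_sum1 s x) mulr_sumr.
by apply: eq_bigr => b _; rewrite mulrAC.
Qed.

Lemma change_of_measure nu pol nu' pol' j (u : S -> actprefix A j -> A -> R) :
  abs_cont nu pol nu' pol' j -> abs_cont nu pol nu' pol' j.+1 ->
  \sum_s \sum_x joint_law nu' pol' j s x * \sum_b u s x b * (pol' j s x b - pol j s x b) =
  \sum_s \sum_x \sum_b
     sigma_law nu pol j s x b * density nu pol nu' pol' j.+1 s (prefix_rcons x b) * u s x b
  - \sum_s \sum_x \sum_b sigma_law nu pol j s x b * density nu pol nu' pol' j s x * u s x b.
Proof.
move=> ac ac1; rewrite -sumrB; apply: eq_bigr => s _; rewrite -sumrB; apply: eq_bigr => x _.
rewrite mulr_sumr -sumrB; apply: eq_bigr => b _.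
have dens1 : sigma_law nu pol j s x b * density nu pol nu' pol' j.+1 s (prefix_rcons x b) =
    joint_law nu' pol' j s x * pol' j s x b.
  by rewrite -joint_law_rcons -abs_cont_densityE // joint_law_rcons.
have dens0 : sigma_law nu pol j s x b * density nu pol nu' pol' j s x =
    joint_law nu' pol' j s x * pol j s x b.
  by rewrite (abs_cont_densityE s x ac) /sigma_law /joint_law; ring.
by rewrite dens1 dens0; ring.
Qed.

Lemma sigma_error_bound nu pol j (w e1 e2 : S -> actprefix A j -> A -> R) (c eps xi : R) :
  (forall s x b, 0 <= sigma_law nu pol j s x b) -> 0 <= c -> 0 <= eps -> 0 <= xi ->
  sq_err nu pol j e1 <= eps ^+ 2 -> sq_err nu pol j e2 <= xi ^+ 2 ->
  `|\sum_s \sum_x \sum_b sigma_law nu pol j s x b * w s x b * (e1 s x b + c * e2 s x b)|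
    <= Num.sqrt (sq_err nu pol j w) * (eps + c * xi).
Proof.
move=> sigma_ge0; rewrite /sq_err.
have flat (F : S -> actprefix A j -> A -> R) :
    \sum_s \sum_x \sum_b F s x b = \sum_(q : S * (actprefix A j * A)) F q.1 q.2.1 q.2.2.
  by under eq_bigr => s _ do rewrite pair_bigA; rewrite pair_bigA.
rewrite !flat; apply: weighted_error_bound => q; exact: sigma_ge0.
Qed.

End JointLaws.

(* Paper's agent m is the 0-based index j = m - 1 here (actprefix a^{1:m-1} has length j). *)
Theorem lemma6 (R : realType) (S A : finType) (N d : nat)
  (P : S -> actprefix A N -> S -> R)
  (phi : forall j : nat, S -> actprefix A j -> A -> 'rV[R]_d)
  (hphi : forall j s (x : actprefix A j) b, dotv (phi j s x b) (phi j s x b) <= 1)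
  (theta_k theta_k1 : nat -> 'rV[R]_d)
  (pistar : seqpolicy R S A) (hpistar : is_policy N pistar)
  (nu_k nu_star : S -> R)
  (hnu_k : stationary N P (loglin phi theta_k) nu_k)
  (hnu_star : stationary N P pistar nu_star)
  (j : nat) (hj : (j < N)%N)
  (hac0 : abs_cont nu_k (loglin phi theta_k) nu_star pistar j)
  (hac1 : abs_cont nu_k (loglin phi theta_k) nu_star pistar j.+1)
  (beta : R) (hbeta : 0 < beta)
  (Q Qhat : S -> actprefix A j -> A -> R)
  (eps xi : R) (heps : 0 <= eps) (hxi : 0 <= xi)
  (h1 : sq_err nu_k (loglin phi theta_k) j (fun s x b =>
          dotv (phi j s x b) (theta_k1 j - theta_k j) - beta^-1 * Qhat s x b) <= eps ^+ 2)
  (h2 : sq_err nu_k (loglin phi theta_k) j (fun s x b => Qhat s x b - Q s x b) <= xi ^+ 2) :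
  let pi_next : S -> actprefix A j -> A -> R := fun s x =>
    softmax (fun b => beta^-1 * Q s x b + dotv (phi j s x b) (theta_k j)) in
  let Delta := Num.sqrt 2 *
    (conc nu_k (loglin phi theta_k) nu_star pistar j.+1
     + conc nu_k (loglin phi theta_k) nu_star pistar j) * (eps + xi / beta) in
  `| \sum_s \sum_(x : actprefix A j) joint_law nu_star pistar j s x *
       \sum_b ln (loglin phi theta_k1 j s x b / pi_next s x b)
              * (pistar j s x b - loglin phi theta_k j s x b) | <= Delta.
Proof.
cbv zeta beta.
set pk := loglin phi theta_k.
have [[nu_k_ge0 _] _] := hnu_k.
have pistar_sum1 s x := (hpistar j hj s x).2.
have pk_sum1 s x : \sum_b pk j s x b = 1.
  by apply: sum_softmax; exact: sum_eq1_card_gt0 (pistar_sum1 s x).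
pose g s x b := beta^-1 * Q s x b + dotv (phi j s x b) (theta_k j).
pose u s x b := dotv (phi j s x b) (theta_k1 j - theta_k j) - beta^-1 * Qhat s x b
  + beta^-1 * (Qhat s x b - Q s x b).
have log_ratio_logits s x : \sum_b ln (loglin phi theta_k1 j s x b / softmax (g s x) b)
    * (pistar j s x b - pk j s x b) = \sum_b u s x b * (pistar j s x b - pk j s x b).
  rewrite sum_ln_softmax_ratio ?pistar_sum1 ?pk_sum1 //.
  by apply: eq_bigr => b _; rewrite /u /g dotvB; congr (_ * _); ring.
under eq_bigr => s _ do under eq_bigr => x _ do rewrite log_ratio_logits.
rewrite (@change_of_measure _ _ _ nu_k pk) //; apply: le_trans (ler_normB _ _) _.
have sigma_ge0 s x b : 0 <= sigma_law nu_k pk j s x b.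
  by apply: sigma_law_ge0 => // *; apply: loglin_ge0.
have err_bound (w : S -> actprefix A j -> A -> R) :
    `|\sum_s \sum_x \sum_b sigma_law nu_k pk j s x b * w s x b * u s x b|
    <= Num.sqrt (sq_err nu_k pk j w) * (eps + beta^-1 * xi).
  by apply: sigma_error_bound => //; rewrite invr_ge0 ltW.
apply: le_trans (lerD (err_bound _) (err_bound _)) _.
rewrite conc_succ_sq_err conc_sq_err; last exact: pk_sum1.
rewrite -mulrDl [xi / beta]mulrC.
have sqrt2_ge1 : 1 <= Num.sqrt (2 : R).
  by rewrite -[leLHS]sqrtr1 ler_sqrt // ler1n.
have err_ge0 : 0 <= eps + beta^-1 * xi by rewrite addr_ge0 // mulr_ge0 // invr_ge0 ltW.
by rewrite ler_wpM2r // ler_peMl // addr_ge0 ?sqrtr_ge0.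
Qed.
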